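(* Let $S$ be any scheduling rule, $V$ a finite set of variables, $G$ a p-goal and $G'$ a p-variant of $G$. Then: (a) if $G\xrightarrow{S,D}Q$ and $G'\xrightarrow{S,D}R$ are p-SLD derivations via $S$ with the same template $D$, then $R$ is a p-variant of $Q$; (b) if there is a p-SLD derivation $G'\xrightarrow{S,D}\cdot$ via $S$, then there is a p-SLD derivation $Dr=(G\xrightarrow{S,D}\cdot)$ via $S$ with $nvar(Dr)\cap V=\emptyset$.
   Context: A p-atom is a pair $a[p]$ of an atom $a$ and a rational priority $p$. A p-goal is a finite set of p-atoms with pairwise distinct priorities, regarded as a list ordered by increasing priority. Substitutions act on atoms and leave priorities unchanged. A clause is $h\leftarrow B$ with $h$ an atom and $B$ a p-goal. For p-goals with no common priority, $F+G=F\cup G$; $F|G$ denotes $F+G$ when all priorities of $F$ are smaller than those of $G$. A shifting $\underline{\pi}$ is a strictly increasing bijection $\mathbb{Q}\to\mathbb{Q}$ acting on priorities ($G\underline\pi$). $F$ is a p-variant of $G$ if $F=G\lambda\underline{\sigma}$ for a renaming $\lambda$ and a shifting $\underline{\sigma}$. Priority derivation step: for a p-goal $a|F$ ($a$ of least priority), clause $c=(h\leftarrow B)$, renaming $\xi$ with $var(a|F)\cap var(c\xi)=\emptyset$, idempotent relevant mgu $\theta$ of $a$ and $h\xi$, and shifting $\underline{\pi}$ with $F$, $B\xi\underline{\pi}$ sharing no priority: $a|F\xrightarrow{c\xi,\theta}(F+B\xi\underline{\pi})\theta$. A p-SLD derivation is a sequence of such steps with each renamed clause $c_j\xi_j$ variable-disjoint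 from the initial goal and all earlier renamed clauses; its template is the sequence of applied clauses and $nvar$ is the union of the sets $var(c_j\xi_j)$. Lowering: for $c=(h\leftarrow B)$, a step $a\lambda\underline{\sigma}|(K\lambda\underline{\sigma}+X)\xrightarrow{c}(X+K\lambda\underline{\sigma}+B\xi''\underline{\theta}'')\alpha''$ is a lowering by $X$ of $a|K\xrightarrow{c}(K+B\xi'\underline{\theta}')\alpha'$; a congruent lowering if some shifting $\underline{\rho}$ has $K\underline{\rho}=K\underline{\sigma}$ and $B\underline{\theta}'\underline{\rho}=B\underline{\theta}''$. Steps are (congruent) lowerings of each other if each is a (congruent) lowering of the other. A set $S$ of steps is deterministic if any two steps of $S$ that are lowerings of each other are congruent lowerings of each other; complete if (i) whenever some step $G\xrightarrow{c}\cdot$ exists, some step $G\xrightarrow{c}\cdot$ lies in $S$, and (ii) $S$ contains every step that is a congruent lowering of each other with a step of $S$. A scheduling rule is a complete deterministic set of steps; $G\xrightarrow{S,M}R$ denotes a p-SLD derivation with template $M$ all of whose steps lie in $S$. *)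

From mathcomp Require Import all_boot all_order all_algebra.
Set Implicit Arguments. Unset Strict Implicit. Unset Printing Implicit Defensive.
Import Order.TTheory GRing.Theory Num.Theory.

Inductive term : Type :=
| Var : nat -> term
| Fn : nat -> list term -> term.

Record atom : Type := Atom { asym : nat; aargs : list term }.

(* A substitution, as a total function on variables (its domain is the set of
   x with s x <> Var x). *)
Definition subst := nat -> term.

Fixpoint tsubst (s : subst) (t : term) : term :=
  match t with
  | Var x => s x
  | Fn f ts => Fn f (map (tsubst s) ts)
  end.

Definition asubst (s : subst) (a : atom) : atom :=
  Atom (asym a) (map (tsubst s) (aargs a)).

Fixpoint tvars (t : term) : seq nat :=
  match t with
  | Var x => [:: x]
  | Fn _ ts => flatten (map tvars ts)
  end.

Definition avars (a : atom) : seq nat := flatten (map tvars (aargs a)).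

Definition prio := rat.
Definition patom := (atom * prio)%type.

(* A p-goal is a finite set of p-atoms with pairwise distinct priorities,
   regarded as the list ordered by increasing priority: we represent it by
   this (canonical) strictly priority-sorted list. *)
Definition pgoal := seq patom.
Definition is_pgoal (G : pgoal) : Prop :=
  sorted (fun p q : patom => (p.2 < q.2)%R) G.

Definition prios (G : pgoal) : seq prio := map snd G.
Definition gvars (G : pgoal) : seq nat := flatten (map (fun p : patom => avars p.1) G).

Definition no_common_prio (F G : pgoal) : Prop :=
  forall p, p \in prios F -> p \notin prios G.

(* F + G = F \cup G (meaningful when F and G share no priority). *)
Definition padd (F G : pgoal) : pgoal :=
  sort (fun p q : patom => (p.2 <= q.2)%R) (F ++ G).

Definition gsubst (s : subst) (G : pgoal) : pgoal :=
  map (fun p : patom => (asubst s p.1, p.2)) G.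

Definition shifting (pi : prio -> prio) : Prop :=
  (forall x y : prio, (x < y)%R -> (pi x < pi y)%R) /\ bijective pi.

Definition gshift (pi : prio -> prio) (G : pgoal) : pgoal :=
  map (fun p : patom => (p.1, pi p.2)) G.

Definition renaming (r : nat -> nat) : Prop :=
  bijective r /\ exists s : seq nat, forall x, x \notin s -> r x = x.

Definition ren_subst (r : nat -> nat) : subst := fun x => Var (r x).

Definition pvariant (F G : pgoal) : Prop :=
  exists (lam : nat -> nat) (sig : prio -> prio),
    renaming lam /\ shifting sig /\ F = gshift sig (gsubst (ren_subst lam) G).

Record clause : Type := Clause { chead : atom; cbody : pgoal }.

Definition csubst (s : subst) (c : clause) : clause :=
  Clause (asubst s (chead c)) (gsubst s (cbody c)).

Definition cvars (c : clause) : seq nat := avars (chead c) ++ gvars (cbody c).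

Definition unifier (th : subst) (a b : atom) : Prop := asubst th a = asubst th b.

Definition mgu (th : subst) (a b : atom) : Prop :=
  unifier th a b /\
  forall s : subst, unifier s a b ->
    exists d : subst, forall x, s x = tsubst d (th x).

Definition idempotent (th : subst) : Prop :=
  forall x, tsubst th (th x) = th x.

Definition relevant (th : subst) (a b : atom) : Prop :=
  forall x, th x <> Var x ->
    x \in avars a ++ avars b /\
    forall y, y \in tvars (th x) -> y \in avars a ++ avars b.

Definition irmgu (th : subst) (a b : atom) : Prop :=
  idempotent th /\ relevant th a b /\ mgu th a b.

Record step : Type := Step {
  ssrc : pgoal;
  sclause : clause;
  sren : nat -> nat;
  smgu : subst;
  sshift : prio -> prio }.

Definition rclause (s : step) : clause := csubst (ren_subst (sren s)) (sclause s).

Definition sres (s : step) : pgoal :=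
  match ssrc s with
  | [::] => [::]
  | a :: F => gsubst (smgu s) (padd F (gshift (sshift s) (cbody (rclause s))))
  end.

Definition is_step (s : step) : Prop :=
  is_pgoal (ssrc s) /\ is_pgoal (cbody (sclause s)) /\
  match ssrc s with
  | [::] => False
  | a :: F =>
      renaming (sren s) /\
      (forall x, x \in gvars (a :: F) -> x \notin cvars (rclause s)) /\
      irmgu (smgu s) a.1 (chead (rclause s)) /\
      shifting (sshift s) /\
      no_common_prio F (gshift (sshift s) (cbody (rclause s)))
  end.

Fixpoint chain (G : pgoal) (ds : seq step) (Q : pgoal) : Prop :=
  match ds with
  | [::] => G = Q
  | s :: ds' => is_step s /\ ssrc s = G /\ chain (sres s) ds' Q
  end.

Fixpoint apart (used : seq nat) (ds : seq step) : Prop :=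
  match ds with
  | [::] => True
  | s :: ds' =>
      (forall x, x \in cvars (rclause s) -> x \notin used) /\
      apart (used ++ cvars (rclause s)) ds'
  end.

Definition pSLD (G : pgoal) (ds : seq step) (Q : pgoal) : Prop :=
  chain G ds Q /\ apart (gvars G) ds.

Definition template (ds : seq step) : seq clause := map sclause ds.

Definition nvar (ds : seq step) : seq nat := flatten (map (fun s => cvars (rclause s)) ds).

Definition lowering (s1 s2 : step) : Prop :=
  sclause s2 = sclause s1 /\
  exists (a : patom) (K : pgoal), ssrc s1 = a :: K /\
  exists (lam : nat -> nat) (sig : prio -> prio) (X : pgoal),
    renaming lam /\ shifting sig /\ is_pgoal X /\
    no_common_prio (gshift sig (gsubst (ren_subst lam) K)) X /\
    ssrc s2 = (asubst (ren_subst lam) a.1, sig a.2)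
                :: padd (gshift sig (gsubst (ren_subst lam) K)) X.

Definition congruent_lowering (s1 s2 : step) : Prop :=
  sclause s2 = sclause s1 /\
  exists (a : patom) (K : pgoal), ssrc s1 = a :: K /\
  exists (lam : nat -> nat) (sig : prio -> prio) (X : pgoal),
    renaming lam /\ shifting sig /\ is_pgoal X /\
    no_common_prio (gshift sig (gsubst (ren_subst lam) K)) X /\
    ssrc s2 = (asubst (ren_subst lam) a.1, sig a.2)
                :: padd (gshift sig (gsubst (ren_subst lam) K)) X /\
    exists rho : prio -> prio, shifting rho /\
      gshift rho K = gshift sig K /\
      gshift rho (gshift (sshift s1) (cbody (sclause s1)))
        = gshift (sshift s2) (cbody (sclause s1)).

Definition mutual_lowerings (s1 s2 : step) : Prop := lowering s1 s2 /\ lowering s2 s1.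
Definition mutual_congruent_lowerings (s1 s2 : step) : Prop :=
  congruent_lowering s1 s2 /\ congruent_lowering s2 s1.

Definition deterministic (S : step -> Prop) : Prop :=
  forall s1 s2, S s1 -> S s2 -> mutual_lowerings s1 s2 ->
    mutual_congruent_lowerings s1 s2.

Definition complete (S : step -> Prop) : Prop :=
  (forall G c, (exists s, is_step s /\ ssrc s = G /\ sclause s = c) ->
     exists s, S s /\ ssrc s = G /\ sclause s = c) /\
  (forall s1 s2, S s1 -> is_step s2 -> mutual_congruent_lowerings s1 s2 -> S s2).

Definition scheduling_rule (S : step -> Prop) : Prop :=
  (forall s, S s -> is_step s) /\ complete S /\ deterministic S.

Fixpoint all_in (S : step -> Prop) (ds : seq step) : Prop :=
  match ds with [::] => True | s :: ds' => S s /\ all_in S ds' end.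

Definition pSLD_via (S : step -> Prop) (G : pgoal) (D : seq clause)
    (ds : seq step) (Q : pgoal) : Prop :=
  pSLD G ds Q /\ template ds = D /\ all_in S ds.

(* Two steps of a scheduling rule with
   the same clause whose sources are p-variants are lowerings of each other (by
   the empty goal), so by determinism they are congruent lowerings: the
   shiftings they apply to the clause body agree up to the shifting relating
   the sources.  As idempotent relevant mgus are unique up to renaming, the
   resulting goals are p-variants again.
   (b) replays the derivation of G' on G: completeness gives a step of the rule
   with the same clause on the current goal; renaming its clause apart from V
   and from all variables used so far yields a congruent lowering of it, hence
   again a step of the rule, and the current goals stay p-variants by (a). *)

From mathcomp Require Import all_boot all_order all_algebra.
From Stdlib Require Import Classical FunctionalExtensionality.
From Stdlib Require List.
Set Implicit Arguments. Unset Strict Implicit. Unset Printing Implicit Defensive.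
Import Order.TTheory GRing.Theory Num.Theory.

Section TermInd.
Variable P : term -> Prop.
Hypothesis PVar : forall x, P (Var x).
Hypothesis PFn : forall f ts, (forall t, List.In t ts -> P t) -> P (Fn f ts).

Fixpoint term_nested_ind (t : term) : P t :=
  match t with
  | Var x => PVar x
  | Fn f ts => @PFn f ts
      ((fix args (l : seq term) : forall u, List.In u l -> P u :=
       match l as l0 return forall u, List.In u l0 -> P u with
       | [::] => fun u (H : False) => False_ind (P u) H
       | a :: l' => fun u (H : a = u \/ List.In u l') =>
           match H with
           | or_introl e => eq_ind a P (term_nested_ind a) u e
           | or_intror H' => args l' u H'
           end
       end) ts)
  end.
End TermInd.

Lemma eq_map_In (A : Type) (f g : term -> A) (ts : seq term) :
  (forall t, List.In t ts -> f t = g t) -> map f ts = map g ts.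
Proof.
elim: ts => //= a l IH H; rewrite H; last by left.
by rewrite IH // => t Ht; apply: H; right.
Qed.

Lemma In_tvars y u ts :
  List.In u ts -> y \in tvars u -> y \in flatten (map tvars ts).
Proof.
elim: ts => //= a l IH [->|H] Hy; rewrite mem_cat ?Hy //.
by rewrite IH ?orbT.
Qed.

Lemma tsubst_comp s1 s2 t :
  tsubst s2 (tsubst s1 t) = tsubst (fun x => tsubst s2 (s1 x)) t.
Proof.
elim/term_nested_ind: t => //= f ts IH; congr Fn; rewrite -map_comp.
by apply: eq_map_In => t Ht; rewrite /= IH.
Qed.

Lemma tsubst_ext s1 s2 t :
  (forall x, x \in tvars t -> s1 x = s2 x) -> tsubst s1 t = tsubst s2 t.
Proof.
elim/term_nested_ind: t => /= [x H|f ts IH H]; first by apply: H; rewrite inE.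
congr Fn; apply: eq_map_In => u Hu; apply: IH => // x Hx.
by apply: H; apply: In_tvars Hx.
Qed.

Lemma tsubst_Var t : tsubst Var t = t.
Proof.
elim/term_nested_ind: t => //= f ts IH; congr Fn.
by rewrite -[RHS]map_id; apply: eq_map_In.
Qed.

Lemma tvars_tsubst s t y :
  (y \in tvars (tsubst s t)) = has (fun x => y \in tvars (s x)) (tvars t).
Proof.
elim/term_nested_ind: t => /= [x|f ts IH]; first by rewrite orbF.
elim: ts IH => //= a l IHl IH.
rewrite mem_cat has_cat IH; last by left.
by rewrite IHl // => t Ht; apply: IH; right.
Qed.

Lemma tsubst_fixed_vars s t :
  tsubst s t = t -> forall y, y \in tvars t -> s y = Var y.
Proof.
elim/term_nested_ind: t => /= [x H y|f ts IH [E] y]; first by rewrite inE => /eqP ->.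
elim: ts IH E => //= a l IHl IH [Ea El].
rewrite mem_cat => /orP [Hy|Hy]; first by apply: (IH a) => //; left.
by apply: IHl => // t Ht; apply: IH; right.
Qed.

Lemma asubst_comp s1 s2 a :
  asubst s2 (asubst s1 a) = asubst (fun x => tsubst s2 (s1 x)) a.
Proof. by rewrite /asubst /= -map_comp; congr Atom; apply: eq_map => t; apply: tsubst_comp. Qed.

Lemma asubst_ext s1 s2 a :
  (forall x, x \in avars a -> s1 x = s2 x) -> asubst s1 a = asubst s2 a.
Proof.
rewrite /asubst /avars => H; congr Atom; elim: (aargs a) H => //= t l IH H.
by congr cons; [apply: tsubst_ext|apply: IH] => x Hx; apply: H; rewrite mem_cat Hx ?orbT.
Qed.

Lemma asubst_Var a : asubst Var a = a.
Proof. by case: a => f l; rewrite /asubst /=; congr Atom; rewrite -[RHS]map_id; apply: eq_map => t; apply: tsubst_Var. Qed.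

Lemma avars_asubst s a y :
  (y \in avars (asubst s a)) = has (fun x => y \in tvars (s x)) (avars a).
Proof. by rewrite /avars /asubst /=; elim: (aargs a) => //= t l IH; rewrite !mem_cat has_cat IH tvars_tsubst. Qed.

Lemma gvars_cons p G : gvars (p :: G) = avars p.1 ++ gvars G.
Proof. by []. Qed.

Lemma gsubst_comp s1 s2 G :
  gsubst s2 (gsubst s1 G) = gsubst (fun x => tsubst s2 (s1 x)) G.
Proof. by rewrite /gsubst -map_comp; apply: eq_map => p /=; rewrite asubst_comp. Qed.

Lemma gsubst_ext s1 s2 G :
  (forall x, x \in gvars G -> s1 x = s2 x) -> gsubst s1 G = gsubst s2 G.
Proof.
elim: G => //= p G IH H; rewrite IH ?(asubst_ext (s2 := s2)) // => x Hx.
  by apply: H; rewrite gvars_cons mem_cat Hx.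
by apply: H; rewrite gvars_cons mem_cat Hx orbT.
Qed.

Lemma gsubst_Var G : gsubst Var G = G.
Proof. by elim: G => //= [[a p] G IH]; rewrite asubst_Var IH. Qed.

Lemma gvars_gsubst s G y :
  (y \in gvars (gsubst s G)) = has (fun x => y \in tvars (s x)) (gvars G).
Proof. by elim: G => //= p G IH; rewrite !gvars_cons mem_cat has_cat avars_asubst -IH. Qed.

Lemma gvars_gshift f G : gvars (gshift f G) = gvars G.
Proof. by elim: G => //= p G IH; rewrite !gvars_cons IH. Qed.

Lemma gshift_gsubst f s G : gshift f (gsubst s G) = gsubst s (gshift f G).
Proof. by rewrite /gshift /gsubst -!map_comp. Qed.

Lemma gshift_comp f g G : gshift f (gshift g G) = gshift (fun p => f (g p)) G.
Proof. by rewrite /gshift -map_comp. Qed.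

Lemma prios_gsubst s G : prios (gsubst s G) = prios G.
Proof. by rewrite /prios /gsubst -map_comp. Qed.

Lemma prios_gshift f G : prios (gshift f G) = map f (prios G).
Proof. by rewrite /prios /gshift -!map_comp. Qed.

Lemma cvars_csubst s c y :
  (y \in cvars (csubst s c)) = has (fun x => y \in tvars (s x)) (cvars c).
Proof. by rewrite /cvars /csubst /= mem_cat has_cat avars_asubst gvars_gsubst. Qed.

Lemma has_ren_subst (r : nat -> nat) l y :
  has (fun x => y \in tvars (ren_subst r x)) l = (y \in map r l).
Proof. by elim: l => //= a l IH; rewrite IH inE. Qed.

Lemma avars_ren r a y : (y \in avars (asubst (ren_subst r) a)) = (y \in map r (avars a)).
Proof. by rewrite avars_asubst has_ren_subst. Qed.

Lemma gvars_ren r G y : (y \in gvars (gsubst (ren_subst r) G)) = (y \in map r (gvars G)).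
Proof. by rewrite gvars_gsubst has_ren_subst. Qed.

Lemma cvars_ren r c y : (y \in cvars (csubst (ren_subst r) c)) = (y \in map r (cvars c)).
Proof. by rewrite cvars_csubst has_ren_subst. Qed.

Lemma renaming_id : renaming id.
Proof. by split; [exists id | exists [::]]. Qed.

Lemma renaming_comp r1 r2 : renaming r1 -> renaming r2 -> renaming (fun x => r1 (r2 x)).
Proof.
move=> [b1 [s1 H1]] [b2 [s2 H2]]; split; first exact: bij_comp.
by exists (s1 ++ s2) => x; rewrite mem_cat negb_or => /andP [h1 h2]; rewrite H2 // H1.
Qed.

Lemma renaming_inv r : renaming r ->
  exists ri, renaming ri /\ cancel r ri /\ cancel ri r.
Proof.
move=> [[ri c1 c2] [s H]]; exists ri; split=> //; split; first by exists r.
by exists s => x Hx; rewrite -{1}(H x Hx) c1.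
Qed.

Lemma renaming_inj r : renaming r -> injective r.
Proof. by move=> [/bij_inj]. Qed.

Definition swap (u v x : nat) := if x == u then v else if x == v then u else x.

Lemma swap_fixed u v x : x != u -> x != v -> swap u v x = x.
Proof. by rewrite /swap => /negPf -> /negPf ->. Qed.

Lemma swapK u v : involutive (swap u v).
Proof.
move=> x; rewrite /swap.
case: (eqVneq x u) => [->|xu]; first by rewrite eqxx; case: eqVneq.
case: (eqVneq x v) => [->|xv]; first by rewrite eqxx.
by rewrite (negPf xu) (negPf xv).
Qed.

Lemma renaming_swap u v : renaming (swap u v).
Proof.
split; first exact: inv_bij (swapK u v).
by exists [:: u; v] => x; rewrite !inE negb_or => /andP [xu xv]; apply: swap_fixed.
Qed.

(* Induction on [A]: post-composing with a transposition sends the new point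
   to its prescribed image without disturbing the old ones. *)
Lemma renaming_extend (A : seq nat) (g : nat -> nat) :
  {in A &, injective g} ->
  exists p, renaming p /\ {in A, forall x, p x = g x} /\
    (forall x, x \notin A ++ map g A -> p x = x).
Proof.
elim: A => [|a A IH] g_inj; first by exists id; split; [exact: renaming_id|].
have [|p [rp [pA pS]]] := IH; first by apply: sub_in2 g_inj => x; rewrite inE orbC => ->.
have p_inj := renaming_inj rp.
have sub_supp x : x \notin (a :: A) ++ map g (a :: A) -> x \notin A ++ map g A.
  by apply: contra; rewrite !mem_cat !inE => /orP [|] ->; rewrite ?orbT.
case aA: (a \in A).
  exists p; split=> //; split=> [x|x /sub_supp]; last exact: pS.
  by rewrite inE => /predU1P [->|]; apply: pA.
exists (fun x => swap (p a) (g a) (p x)); split.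
  exact: renaming_comp (renaming_swap _ _) rp.
split=> [x|x out_x].
  rewrite inE => /predU1P [->|xA]; first by rewrite /swap eqxx.
  have xa : x != a by apply: contraTneq xA => ->; rewrite aA.
  rewrite (pA x xA) swap_fixed //; first by rewrite -(pA x xA) (inj_eq p_inj).
  by rewrite (inj_in_eq g_inj) ?inE ?xA ?eqxx ?orbT.
have px : p x = x by apply: pS; apply: sub_supp.
have xa : x != a by apply: contraNneq out_x => ->; rewrite mem_cat mem_head.
rewrite px swap_fixed //; first by rewrite -{1}px (inj_eq p_inj).
by apply: contraNneq out_x => ->; rewrite mem_cat map_f ?mem_head ?orbT.
Qed.

Lemma fresh_renaming (c W : seq nat) :
  exists xi, renaming xi /\ forall x, x \in map xi c -> x \notin W.
Proof.
set N := (\max_(w <- W) w).+1.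
have [|p [rp [pc _]]] := @renaming_extend c (addn N); first by move=> x y _ _ /addnI.
exists p; split=> // y /mapP [x xc ->]; rewrite pc //.
apply: contraTN isT => /(leq_bigmax_seq (P := xpredT) (F := id)) /(_ isT).
by rewrite leqNgt ltnS leq_addr.
Qed.

Section Shiftings.
Local Open Scope ring_scope.

Lemma shifting_lt f x y : shifting f -> (f x < f y) = (x < y).
Proof.
move=> [f_mono _]; case: (ltgtP x y) => [xy|yx|->]; first exact: f_mono.
  exact/lt_gtF/f_mono.
by rewrite ltxx.
Qed.

Lemma shifting_le f x y : shifting f -> (f x <= f y) = (x <= y).
Proof. by move=> f_shift; rewrite !leNgt shifting_lt. Qed.

Lemma shifting_id : shifting id.
Proof. by split=> //; exists id. Qed.

Lemma shifting_comp f g : shifting f -> shifting g -> shifting (fun p => f (g p)).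
Proof. by move=> [Hf bf] [Hg bg]; split; [move=> x y /Hg /Hf | exact: bij_comp]. Qed.

Lemma shifting_inv f : shifting f ->
  exists fi, shifting fi /\ cancel f fi /\ cancel fi f.
Proof.
move=> f_shift; case: (f_shift) => _ [fi c1 c2]; exists fi; split=> //.
by split; [move=> x y xy; rewrite -(shifting_lt _ _ f_shift) !c2 | exists f].
Qed.

Lemma is_pgoalE G : is_pgoal G = sorted <%R (prios G).
Proof. by rewrite /is_pgoal /prios sorted_map. Qed.

Lemma is_pgoal_gsubst s G : is_pgoal (gsubst s G) = is_pgoal G.
Proof. by rewrite !is_pgoalE prios_gsubst. Qed.

Lemma is_pgoal_gshift f G : shifting f -> is_pgoal (gshift f G) = is_pgoal G.
Proof.
move=> f_shift; have f_mono : relpre f <%R =2 <%R by move=> x y /=; rewrite shifting_lt.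
by rewrite !is_pgoalE prios_gshift sorted_map (eq_sorted f_mono).
Qed.

Lemma is_pgoal_behead a K : is_pgoal (a :: K) -> is_pgoal K.
Proof. exact: path_sorted. Qed.

Lemma padd0 L : is_pgoal L -> padd L [::] = L.
Proof.
move=> L_pgoal; rewrite /padd cats0 sorted_sort //; first by move=> y x z; apply: le_trans.
by apply: sub_sorted L_pgoal => x y /ltW.
Qed.

Lemma size_padd F G : size (padd F G) = (size F + size G)%N.
Proof. by rewrite /padd size_sort size_cat. Qed.

Lemma prios_padd F G : prios (padd F G) = sort <=%R (prios F ++ prios G).
Proof. by rewrite /prios /padd -map_cat sort_map. Qed.

Lemma gsubst_padd s F G : gsubst s (padd F G) = padd (gsubst s F) (gsubst s G).
Proof. by rewrite /padd /gsubst -map_cat sort_map. Qed.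

(* There is no [eq_sort] for extensionally equal orders, hence funext. *)
Lemma gshift_padd f F G : shifting f ->
  gshift f (padd F G) = padd (gshift f F) (gshift f G).
Proof.
move=> f_shift; rewrite /padd /gshift -map_cat sort_map; congr (map _ (sort _ _)).
by do 2!apply: functional_extensionality => ?; rewrite /= shifting_le.
Qed.

Lemma is_pgoal_padd F G : is_pgoal F -> is_pgoal G -> no_common_prio F G ->
  is_pgoal (padd F G).
Proof.
rewrite !is_pgoalE prios_padd sort_lt_sorted cat_uniq => F_lt G_lt disj.
rewrite (lt_sorted_uniq F_lt) (lt_sorted_uniq G_lt) andbT /=.
by apply/hasPn => p pG; apply/negP => /disj; rewrite pG.
Qed.

End Shiftings.

Lemma gshift_eq_prios f g K : map f (prios K) = map g (prios K) -> gshift f K = gshift g K.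
Proof. by elim: K => //= p K IH [e1 /IH ->]; rewrite e1. Qed.

Lemma gshift_id f G : f =1 id -> gshift f G = G.
Proof. by move=> f_id; elim: G => //= [[a p] G ->]; rewrite f_id. Qed.

Lemma gsubst_ren_id l G : l =1 id -> gsubst (ren_subst l) G = G.
Proof. by move=> l_id; rewrite -[RHS]gsubst_Var; apply: gsubst_ext => x _; rewrite /ren_subst l_id. Qed.

Lemma asubst_ren_id l a : l =1 id -> asubst (ren_subst l) a = a.
Proof. by move=> l_id; rewrite -[RHS]asubst_Var; apply: asubst_ext => x _; rewrite /ren_subst l_id. Qed.

Lemma variant_id G : gshift id (gsubst (ren_subst id) G) = G.
Proof. by rewrite gshift_id // gsubst_ren_id. Qed.

Lemma variantK lam lami sig sigi G : cancel lam lami -> cancel sig sigi ->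
  gshift sigi (gsubst (ren_subst lami) (gshift sig (gsubst (ren_subst lam) G))) = G.
Proof.
move=> c1 c2; rewrite gshift_gsubst gshift_comp gshift_id // gsubst_comp.
exact: gsubst_ren_id.
Qed.

Lemma relevant_vars th a b x y : relevant th a b -> x \in avars a ++ avars b ->
  y \in tvars (th x) -> y \in avars a ++ avars b.
Proof.
move=> th_rel x_ab; case: (classic (th x = Var x)) => [->|thx]; last exact: (th_rel x thx).2.
by rewrite inE => /eqP ->.
Qed.

Lemma relevant_Var th a b x : relevant th a b -> x \notin avars a ++ avars b -> th x = Var x.
Proof.
move=> th_rel x_ab; apply: NNPP => thx.
by have := (th_rel x thx).1; rewrite (negPf x_ab).
Qed.

Lemma avars2_ren (m : nat -> nat) a b y :
  (y \in avars (asubst (ren_subst m) a) ++ avars (asubst (ren_subst m) b)) =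
  (y \in map m (avars a ++ avars b)).
Proof. by rewrite mem_cat !avars_ren map_cat mem_cat. Qed.

Definition conj_subst (m mi : nat -> nat) (th : subst) : subst :=
  fun y => tsubst (ren_subst m) (th (mi y)).

Section Conjugation.
Variables (m mi : nat -> nat) (th : subst).
Hypotheses (mK : cancel m mi) (miK : cancel mi m).

Lemma tsubst_conj t :
  tsubst (conj_subst m mi th) (tsubst (ren_subst m) t) = tsubst (ren_subst m) (tsubst th t).
Proof. by rewrite !tsubst_comp; apply: tsubst_ext => x _; rewrite /= /conj_subst mK. Qed.

Lemma asubst_conj c :
  asubst (conj_subst m mi th) (asubst (ren_subst m) c) = asubst (ren_subst m) (asubst th c).
Proof. by rewrite /asubst /= -!map_comp; congr Atom; apply: eq_map => t /=; rewrite tsubst_conj. Qed.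

Lemma irmgu_conj a b : irmgu th a b ->
  irmgu (conj_subst m mi th) (asubst (ren_subst m) a) (asubst (ren_subst m) b).
Proof.
move=> [th_idem [th_rel [th_unif th_mgu]]]; split.
  by move=> x; rewrite {2}/conj_subst tsubst_conj th_idem.
split.
  move=> x thx; have thx' : th (mi x) <> Var (mi x).
    by apply: contra_not thx; rewrite /conj_subst => ->; rewrite /= /ren_subst miK.
  have [x_ab th_ab] := th_rel _ thx'.
  split; first by rewrite avars2_ren -{1}(miK x) map_f.
  move=> y; rewrite /conj_subst tvars_tsubst has_ren_subst => /mapP [z z_th ->].
  by rewrite avars2_ren map_f // th_ab.
split; first by rewrite /unifier !asubst_conj th_unif.
move=> s; rewrite /unifier !asubst_comp => /th_mgu [d sd].
exists (fun z => d (mi z)) => y; have := sd (mi y); rewrite /= miK => ->.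
rewrite /conj_subst tsubst_comp.
by apply: tsubst_ext => x _ /=; rewrite mK.
Qed.

End Conjugation.

Lemma renaming_of_var_inverse (m : nat -> nat) (d d' : subst) (A : seq nat) :
  renaming m -> {in A, forall z, tsubst d' (d z) = Var z} ->
  exists p, renaming p /\ {in A, forall z, d z = Var (m (p z))} /\
    (forall x, x \notin A -> {in A, forall z, d z <> Var (m x)} -> p x = x).
Proof.
move=> rm inv_A; have [mi [_ [mK miK]]] := renaming_inv rm.
pose f z := if d z is Var w then w else z.
have dA z : z \in A -> d z = Var (f z) /\ d' (f z) = Var z.
  by move/inv_A; rewrite /f; case: (d z).
have [|p [rp [pA p_supp]]] := @renaming_extend A (fun z => mi (f z)).
  move=> z1 z2 /dA [_ e1] /dA [_ e2] /(can_inj miK) e12.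
  by move: e1; rewrite e12 e2 => [[]].
exists p; split=> //; split=> [z zA|x xA x_im]; first by rewrite pA // miK (dA z zA).1.
apply: p_supp; rewrite mem_cat negb_or xA /=.
apply/mapP => -[z zA xE]; apply: (x_im z zA).
by rewrite xE miK (dA z zA).1.
Qed.

(* Idempotent relevant mgus are unique up to renaming: each is an instance of
   the other, so the instantiating substitution is a bijection of variables on
   the range of [th1]; relevance fixes the variables outside the atoms. *)
Lemma irmgu_ren th1 th2 a b m : irmgu th1 a b -> renaming m ->
  irmgu th2 (asubst (ren_subst m) a) (asubst (ren_subst m) b) ->
  exists eta, renaming eta /\ forall x, th2 (m x) = tsubst (ren_subst eta) (th1 x).
Proof.
move=> [_ [rel1 [unif1 mgu1]]] rm [_ [rel2 [unif2 mgu2]]].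
have [mi [_ [mK miK]]] := renaming_inv rm.
have [d Hd] : exists d : subst, forall x, th2 (m x) = tsubst d (th1 x).
  by apply: mgu1; move: unif2; rewrite /unifier !asubst_comp.
have [d' Hd'] : exists d' : subst, forall y, th1 (mi y) = tsubst d' (th2 y).
  apply: mgu2; rewrite /unifier !asubst_comp.
  by rewrite !(@asubst_ext _ th1) // => x _ /=; rewrite mK.
set R := avars a ++ avars b.
set A := flatten (map (fun x => tvars (th1 x)) R).
have AR z : z \in A -> z \in R by case/flatten_mapP => x xR; apply: relevant_vars.
have [|p [rp [pA p_supp]]] := @renaming_of_var_inverse m d d' A rm.
  move=> z /flatten_mapP [x _ zx]; apply: (tsubst_fixed_vars (s := fun z => tsubst d' (d z))) zx.
  by rewrite -tsubst_comp -Hd -Hd' mK.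
exists (fun z => m (p z)); split=> [|x]; first exact: renaming_comp.
case xR: (x \in R).
  by rewrite Hd; apply: tsubst_ext => z zx; rewrite pA //; apply/flatten_mapP; exists x.
rewrite (relevant_Var rel1) ?xR //= (relevant_Var rel2) /ren_subst; last first.
  by rewrite avars2_ren (mem_map (renaming_inj rm)) -/R xR.
rewrite p_supp //; first by apply: contraFN xR => /AR.
move=> z /flatten_mapP [x' x'R zx'] dz.
have mx_th2 : m x \in tvars (th2 (m x')).
  by rewrite Hd tvars_tsubst; apply/hasP; exists z; rewrite ?dz ?inE.
have : m x \in map m R by rewrite -avars2_ren (relevant_vars rel2 _ mx_th2) // avars2_ren map_f.
by rewrite (mem_map (renaming_inj rm)) xR.
Qed.

Lemma asubst_ren_eq_in m l a : {in avars a, m =1 l} ->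
  asubst (ren_subst m) a = asubst (ren_subst l) a.
Proof. by move=> ml; apply: asubst_ext => x xa; rewrite /ren_subst ml. Qed.

Lemma gsubst_ren_eq_in m l G : {in gvars G, m =1 l} ->
  gsubst (ren_subst m) G = gsubst (ren_subst l) G.
Proof. by move=> ml; apply: gsubst_ext => x xG; rewrite /ren_subst ml. Qed.

Lemma csubst_ren_comp_eq_in mu xi xi' c : {in cvars c, forall x, mu (xi x) = xi' x} ->
  csubst (ren_subst mu) (csubst (ren_subst xi) c) = csubst (ren_subst xi') c.
Proof.
move=> E; rewrite /csubst /= asubst_comp gsubst_comp.
by congr Clause; [apply: asubst_ext|apply: gsubst_ext] => x x_c;
  rewrite /= /ren_subst E // /cvars mem_cat x_c ?orbT.
Qed.

(* Apartness makes [lam] on the goal and [xi2 \o xi1^-1] on the first copy of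
   the clause combine into one injective map. *)
Lemma renaming_glue (lam xi1 xi2 : nat -> nat) G c :
  renaming lam -> renaming xi1 -> renaming xi2 ->
  (forall x, x \in gvars G -> x \notin cvars (csubst (ren_subst xi1) c)) ->
  (forall x, x \in map lam (gvars G) -> x \notin cvars (csubst (ren_subst xi2) c)) ->
  exists mu, renaming mu /\ {in gvars G, mu =1 lam} /\
    csubst (ren_subst mu) (csubst (ren_subst xi1) c) = csubst (ren_subst xi2) c.
Proof.
move=> rl r1 r2 apart1 apart2.
have [x1i [_ [x1K x1iK]]] := renaming_inv r1.
pose g z := if z \in gvars G then lam z else xi2 (x1i z).
have lam_inj := renaming_inj rl; have xi2_inj := renaming_inj r2.
have mixed u w : u \in gvars G -> w \in map xi1 (cvars c) -> lam u <> xi2 (x1i w).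
  move=> uG /mapP [v vc ->] E; rewrite x1K in E.
  by have := apart2 _ (map_f lam uG); rewrite E cvars_ren map_f.
have [|mu [rmu [muA _]]] := @renaming_extend (gvars G ++ map xi1 (cvars c)) g.
  move=> z1 z2; rewrite !mem_cat /g.
  case h1: (z1 \in gvars G); case h2: (z2 \in gvars G) => //= z1c z2c.
  - exact: lam_inj.
  - by move/(mixed _ _ h1 z2c).
  - by move/esym/(mixed _ _ h2 z1c).
  - by move/xi2_inj/(can_inj x1iK).
exists mu; split=> //; split=> [x xG|]; first by rewrite muA /g ?xG // mem_cat xG.
apply: csubst_ren_comp_eq_in => x xc; rewrite muA /g; last by rewrite mem_cat map_f ?orbT.
have -> : (xi1 x \in gvars G) = false.
  by apply/negP => /apart1; rewrite cvars_ren map_f.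
by rewrite x1K.
Qed.

Lemma no_common_prio_gshift F B f g : shifting f -> no_common_prio F (gshift g B) ->
  no_common_prio (gshift f F) (gshift (fun p => f (g p)) B).
Proof.
move=> [_ /bij_inj f_inj] FB p; rewrite !prios_gshift => /mapP [q qF ->].
have -> : map (fun p => f (g p)) (prios B) = map f (prios (gshift g B)).
  by rewrite prios_gshift -map_comp.
by rewrite (mem_map f_inj); apply: FB.
Qed.

Lemma no_common_prio_prios F B F' B' : prios F = prios F' -> prios B = prios B' ->
  no_common_prio F B -> no_common_prio F' B'.
Proof. by move=> eF eB FB p; rewrite -eF -eB; apply: FB. Qed.

Lemma step_transport s lam sig (W : seq nat) : is_step s -> renaming lam -> shifting sig ->
  exists t, is_step t /\ ssrc t = gshift sig (gsubst (ren_subst lam) (ssrc s)) /\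
    sclause t = sclause s /\ (forall x, x \in cvars (rclause t) -> x \notin W) /\
    sshift t =1 (fun p => sig (sshift s p)).
Proof.
case: s => [[|a F] c xi th pi]; rewrite /is_step /=; first by case=> _ [].
move=> [aF_pgoal [B_pgoal [rxi [apart [th_mgu [pi_shift FB]]]]]] rl sig_shift.
set G1 := gshift sig (gsubst (ren_subst lam) (a :: F)).
have [xi' [rxi' fresh]] := fresh_renaming (cvars c) (W ++ gvars G1).
have {}fresh x : x \in cvars (csubst (ren_subst xi') c) -> x \notin W ++ gvars G1.
  by rewrite cvars_ren; apply: fresh.
have [|mu [rmu [mu_lam mu_xi]]] := renaming_glue rl rxi rxi' apart.
  move=> x xG; apply/negP => /fresh.
  by rewrite mem_cat negb_or /G1 gvars_gshift gvars_ren xG andbF.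
have [mui [_ [muK muiK]]] := renaming_inv rmu.
exists (Step G1 c xi' (conj_subst mu mui th) (fun p => sig (pi p))).
split; last by do 3!split=> //; move=> x /fresh; rewrite mem_cat negb_or => /andP [].
split; first by rewrite is_pgoal_gshift // is_pgoal_gsubst.
split=> //=; split=> //; split.
  by move=> x xG; apply/negP => /fresh; rewrite mem_cat xG orbT.
split; last split.
- have := irmgu_conj muK muiK th_mgu.
  rewrite (@asubst_ren_eq_in mu lam) => [|x xa]; last by rewrite mu_lam // gvars_cons mem_cat xa.
  by move/(congr1 chead): mu_xi => /= ->.
- exact: shifting_comp.
- apply: (no_common_prio_prios _ _ (no_common_prio_gshift sig_shift FB)).
    by rewrite !prios_gshift prios_gsubst.
  by rewrite !prios_gshift !prios_gsubst.
Qed.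

Lemma variant_steps_lowerings s1 s2 lam sig : is_step s1 -> renaming lam -> shifting sig ->
  ssrc s2 = gshift sig (gsubst (ren_subst lam) (ssrc s1)) -> sclause s2 = sclause s1 ->
  mutual_lowerings s1 s2.
Proof.
case: s1 => [[|a K] c xi th pi]; rewrite /is_step /=; first by case=> _ [].
move=> [aK_pgoal _] rl sig_shift src2 cl2.
have K_pgoal := is_pgoal_behead aK_pgoal.
have [lami [rli [lamK _]]] := renaming_inv rl.
have [sigi [sigi_shift [sigK _]]] := shifting_inv sig_shift.
split; split=> //; rewrite src2.
  exists a, K; split=> //; exists lam, sig, [::]; do 4!split=> //.
  by rewrite padd0 // is_pgoal_gshift // is_pgoal_gsubst.
exists (asubst (ren_subst lam) a.1, sig a.2), (gshift sig (gsubst (ren_subst lam) K)).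
split=> //; exists lami, sigi, [::]; do 4!split=> //.
rewrite padd0; first exact: esym (variantK (a :: K) lamK sigK).
by rewrite !(is_pgoal_gshift, is_pgoal_gsubst).
Qed.

(* The lowering of a step to the source of a p-variant is by the empty goal;
   congruence then says how the shifting of the clause body is transported. *)
Lemma congruent_lowering_variant s1 s2 a K lam sig :
  congruent_lowering s1 s2 -> ssrc s1 = a :: K -> is_pgoal K ->
  ssrc s2 = gshift sig (gsubst (ren_subst lam) (a :: K)) ->
  exists rho, shifting rho /\ gshift rho K = gshift sig K /\
    gshift rho (gshift (sshift s1) (cbody (sclause s1)))
      = gshift (sshift s2) (cbody (sclause s1)).
Proof.
move=> [_ [a0 [K0 [-> [lam' [sig' [X [_ [sig'_shift [_ [_ [src2 rho_spec]]]]]]]]]]]].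
case=> ? ?; subst a0 K0; rewrite src2 => K_pgoal [_ _ EK].
case: rho_spec => rho [rho_shift [rhoK rhoB]].
have X0 : X = [::].
  move/(congr1 size): EK; rewrite size_padd !size_map.
  by move/eqP; rewrite -{2}[size K]addn0 eqn_add2l => /eqP/size0nil.
move: EK; rewrite X0 padd0; last by rewrite is_pgoal_gshift // is_pgoal_gsubst.
move/(congr1 prios); rewrite !prios_gshift !prios_gsubst => sig_sig'.
by exists rho; rewrite rhoK (gshift_eq_prios sig_sig').
Qed.

Lemma sres_variant a K c xi1 th1 pi1 lam sig xi2 th2 pi2 rho :
  is_step (Step (a :: K) c xi1 th1 pi1) ->
  is_step (Step (gshift sig (gsubst (ren_subst lam) (a :: K))) c xi2 th2 pi2) ->
  renaming lam -> shifting rho -> gshift rho K = gshift sig K ->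
  gshift rho (gshift pi1 (cbody c)) = gshift pi2 (cbody c) ->
  pvariant (sres (Step (gshift sig (gsubst (ren_subst lam) (a :: K))) c xi2 th2 pi2))
           (sres (Step (a :: K) c xi1 th1 pi1)).
Proof.
rewrite /is_step /=.
move=> [_ [_ [rxi1 [apart1 [mgu1 _]]]]] [_ [_ [rxi2 [apart2 [mgu2 _]]]]] rl rho_shift rhoK rhoB.
have [|mu [rmu [mu_lam mu_xi]]] := renaming_glue (G := a :: K) rl rxi1 rxi2 apart1.
  by move=> x xG; apply: apart2; rewrite -[_ :: _]/(gshift sig (gsubst _ (a :: K))) gvars_gshift gvars_ren.
have mu_lamK : gsubst (ren_subst mu) K = gsubst (ren_subst lam) K.
  by apply: gsubst_ren_eq_in => x xK; rewrite mu_lam // gvars_cons mem_cat xK orbT.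
have mu_body := congr1 cbody mu_xi; have mu_head := congr1 chead mu_xi.
move: mu_body mu_head => /= mu_body mu_head.
have [|eta [reta th2_mu]] := irmgu_ren mgu1 rmu (th2 := th2).
  rewrite mu_head (@asubst_ren_eq_in mu lam) // => x xa.
  by rewrite mu_lam // gvars_cons mem_cat xa.
rewrite /sres /=.
have -> : padd (gshift sig (gsubst (ren_subst lam) K)) (gshift pi2 (gsubst (ren_subst xi2) (cbody c)))
    = gsubst (ren_subst mu) (gshift rho (padd K (gshift pi1 (gsubst (ren_subst xi1) (cbody c))))).
  by rewrite -mu_lamK -mu_body gshift_padd // rhoK gsubst_padd !gshift_gsubst rhoB.
exists eta, rho; do 2!split=> //.
by rewrite !gsubst_comp (gshift_gsubst rho); apply: gsubst_ext => x _ /=; rewrite th2_mu.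
Qed.

(* Determinism forces the shiftings of two variant steps to agree up to a
   common shifting, which makes their results p-variants. *)
Lemma step_variant S s1 s2 lam sig : scheduling_rule S -> S s1 -> S s2 ->
  renaming lam -> shifting sig ->
  ssrc s2 = gshift sig (gsubst (ren_subst lam) (ssrc s1)) -> sclause s2 = sclause s1 ->
  pvariant (sres s2) (sres s1).
Proof.
move=> [S_step [_ S_det]] S1 S2 rl sig_shift src2 cl2.
have [cl12 _] := S_det _ _ S1 S2 (variant_steps_lowerings (S_step _ S1) rl sig_shift src2 cl2).
have step1 := S_step _ S1; have step2 := S_step _ S2; clear S1 S2.
case: s1 step1 cl12 src2 cl2 => [[|a K] c xi1 th1 pi1] step1 cl12 src2 cl2.
  by case: step1 => _ [].
case: s2 step2 cl12 src2 cl2 => [src c2 xi2 th2 pi2] step2 cl12 /= src2 cl2.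
subst src c2; have [aK_pgoal _] := step1.
have [rho [rho_shift [rhoK rhoB]]] :=
  congruent_lowering_variant cl12 erefl (is_pgoal_behead aK_pgoal) erefl.
exact: sres_variant step1 step2 rl rho_shift rhoK rhoB.
Qed.

Lemma congruent_lowering_same_source s t a K : ssrc s = a :: K -> is_pgoal K ->
  ssrc t = ssrc s -> sclause t = sclause s -> sshift t =1 sshift s ->
  congruent_lowering s t.
Proof.
move=> src_s K_pgoal src_t cl_t sh_t; split=> //; exists a, K; split=> //.
exists id, id, [::]; split; first exact: renaming_id.
split; first exact: shifting_id.
do 3!split=> //; first by rewrite src_t src_s variant_id padd0 // asubst_ren_id //; case: (a).
exists id; split; first exact: shifting_id.
by split=> //; rewrite gshift_id //; apply: eq_map => p /=; rewrite sh_t.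
Qed.

Lemma mutual_congruent_lowerings_same_source s t : is_step s ->
  ssrc t = ssrc s -> sclause t = sclause s -> sshift t =1 sshift s ->
  mutual_congruent_lowerings s t.
Proof.
case: s => [[|a K] c xi th pi] [aK_pgoal]; first by case.
move=> _ src_t cl_t sh_t; have K_pgoal := is_pgoal_behead aK_pgoal.
split; first exact: congruent_lowering_same_source.
by apply: congruent_lowering_same_source K_pgoal _ _ _ => //=; rewrite src_t.
Qed.

Lemma fresh_variant_step S s' G lam sig (W : seq nat) : scheduling_rule S -> S s' ->
  renaming lam -> shifting sig -> ssrc s' = gshift sig (gsubst (ren_subst lam) G) ->
  exists t, S t /\ ssrc t = G /\ sclause t = sclause s' /\
    (forall x, x \in cvars (rclause t) -> x \notin W) /\ pvariant (sres s') (sres t).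
Proof.
move=> S_rule S1 rl sig_shift src'; have [S_step [[S_ex S_congr] _]] := S_rule.
have [lami [rli [lamK _]]] := renaming_inv rl.
have [sigi [sigi_shift [sigK _]]] := shifting_inv sig_shift.
have [s [Ss [src_s cl_s]]] : exists s, S s /\ ssrc s = G /\ sclause s = sclause s'.
  apply: S_ex; have [t0 [step_t0 [src_t0 [cl_t0 _]]]] :=
    step_transport [::] (S_step _ S1) rli sigi_shift.
  by exists t0; rewrite src_t0 src' variantK.
have [t [step_t [src_t [cl_t [fresh_t sh_t]]]]] :=
  step_transport W (S_step _ Ss) renaming_id shifting_id.
rewrite variant_id in src_t.
have St : S t.
  by apply: (S_congr s) => //; apply: mutual_congruent_lowerings_same_source; auto.
exists t; split=> //; split; first by rewrite src_t.
split; first by rewrite cl_t.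
split=> //; apply: step_variant S_rule St S1 rl sig_shift _ _; first by rewrite src_t src_s.
by rewrite cl_t cl_s.
Qed.

Lemma chain_variant S ds1 ds2 G G' Q R : scheduling_rule S ->
  chain G ds1 Q -> chain G' ds2 R -> all_in S ds1 -> all_in S ds2 ->
  template ds1 = template ds2 -> pvariant G' G -> pvariant R Q.
Proof.
move=> S_rule; elim: ds1 ds2 G G' => [|s1 ds1 IH] [|s2 ds2] G G' //=; first by move=> -> ->.
move=> [_ [src1 ch1]] [_ [src2 ch2]] [S1 A1] [S2 A2] [cl ts] [lam [sig [rl [sig_shift EG]]]].
apply: IH ch1 ch2 A1 A2 ts _; apply: (step_variant S_rule S1 S2 rl sig_shift).
  by rewrite src2 src1.
by rewrite cl.
Qed.

Lemma chain_fresh_variant S (V : seq nat) ds' G G' R (used : seq nat) :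
  scheduling_rule S -> chain G' ds' R -> all_in S ds' -> pvariant G' G ->
  exists ds Q, chain G ds Q /\ apart used ds /\ template ds = template ds' /\
    all_in S ds /\ (forall x, x \in nvar ds -> x \notin V).
Proof.
move=> S_rule; elim: ds' G G' R used => [|s' ds' IH] G G' R used /=.
  by move=> _ _ _; exists [::], G.
move=> [_ [src' ch']] [S1 A'] [lam [sig [rl [sig_shift EG]]]].
have [t [St [src_t [cl_t [fresh_t var_t]]]]] :=
  fresh_variant_step (used ++ V) S_rule S1 rl sig_shift (etrans src' EG).
have [ds [Q [ch [ap [tpl [A HV]]]]]] := IH _ _ _ (used ++ cvars (rclause t)) ch' A' var_t.
have [S_step _] := S_rule.
exists (t :: ds), Q; split; first by split; [exact: S_step|split].
split; first by split=> // x /fresh_t; rewrite mem_cat negb_or => /andP [].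
split; first by rewrite /= tpl cl_t.
split=> // x; rewrite /nvar /= mem_cat => /orP [/fresh_t|/HV //].
by rewrite mem_cat negb_or => /andP [].
Qed.

Theorem lemmaL3p2p2 (S : step -> Prop) (V : seq nat) (G G' : pgoal) :
  scheduling_rule S -> is_pgoal G -> pvariant G' G ->
  (forall (D : seq clause) (ds1 ds2 : seq step) (Q R : pgoal),
      pSLD_via S G D ds1 Q -> pSLD_via S G' D ds2 R -> pvariant R Q) /\
  (forall (D : seq clause),
      (exists (ds' : seq step) (R : pgoal), pSLD_via S G' D ds' R) ->
      exists (ds : seq step) (Q : pgoal),
        pSLD_via S G D ds Q /\ (forall x, x \in nvar ds -> x \notin V)).
Proof.
move=> S_rule _ GG'; split.
  move=> D ds1 ds2 Q R [[ch1 _] [tpl1 A1]] [[ch2 _] [tpl2 A2]].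
  by apply: chain_variant S_rule ch1 ch2 A1 A2 _ GG'; rewrite tpl1 tpl2.
move=> D [ds' [R [[ch' _] [tpl' A']]]].
have [ds [Q [ch [ap [tpl [A HV]]]]]] := chain_fresh_variant V (gvars G) S_rule ch' A' GG'.
by exists ds, Q; do 3!split=> //; rewrite tpl.
Qed.
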